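(* Let $A$ be an $n\times n$ real matrix whose eigenvalues are distinct. Then the following are equivalent: (i) there exists a vector $B_v\in\mathbb{R}^n$ with at most $k$ nonzero entries such that the system $\frac{dx(t)}{dt}=Ax(t)+B_v u(t)$ is controllable; (ii) there exists a real $n\times n$ diagonal matrix $B_d$ with at most $k$ nonzero entries such that the system $\frac{dx(t)}{dt}=Ax(t)+B_d u(t)$ is controllable.
   Context: Controllability refers to the usual notion for continuous-time linear time-invariant systems $\frac{dx}{dt}=Ax+Bu$ (controllability of the pair $(A,B)$). A vector or matrix is called $k$-sparse if it has at most $k$ nonzero entries; the paper phrases (i) as ''the system $\Sigma_v$ is $k$-sparse controllable'' and (ii) as ''the system $\Sigma_d$ is $k$-sparse controllable''. *)

From HB Require Import structures.
From mathcomp Require Import all_boot all_order all_algebra.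
From mathcomp Require Import complex.
From mathcomp Require Import reals.
Set Implicit Arguments. Unset Strict Implicit. Unset Printing Implicit Defensive.
Import Order.TTheory GRing.Theory Num.Theory.
Local Open Scope ring_scope.

Definition nnz (F : pzRingType) m p (M : 'M[F]_(m, p)) : nat :=
  #|[set ij : 'I_m * 'I_p | M ij.1 ij.2 != 0]|.

Definition sparse (F : pzRingType) m p (k : nat) (M : 'M[F]_(m, p)) : bool :=
  (nnz M <= k)%N.

Definition ctrb_mx (F : pzRingType) n m (A : 'M[F]_n) (B : 'M[F]_(n, m)) :
  'M[F]_(n, \sum_(i < n) m) :=
  \mxrow_(i < n) (A ^+ i *m B).

(* controllability of the pair (A,B), i.e. of dx/dt = A x + B u *)
Definition controllable (F : fieldType) n m (A : 'M[F]_n) (B : 'M[F]_(n, m)) : bool :=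
  \rank (ctrb_mx A B) == n.

Definition distinct_eigenvalues (R : realType) n (A : 'M[R]_n) : Prop :=
  forall z : R[i],
    (mup z (char_poly (map_mx (real_complex R) A)) <= 1)%N.

From HB Require Import structures.
From mathcomp Require Import all_boot all_order all_algebra.
From mathcomp Require Import complex.
From mathcomp Require Import reals.
Import Order.TTheory GRing.Theory Num.Theory.
Local Open Scope ring_scope.

(* (i) => (ii) needs no hypothesis on A: diag(B_v) * 1 = B_v, so diag(B_v)
   reaches at least what B_v reaches.
   (ii) => (i): take B_v := B_d c with c = (1, t, ..., t^(n-1)), which has no
   more nonzero entries than B_d. By the Popov-Belevitch-Hautus test over C,
   (A, B_v) is controllable unless w B_d c = 0 for some left eigenvector w.
   Distinct eigenvalues make every eigenspace a line, so up to scaling there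
   is one left eigenvector w_a per eigenvalue a, and w_a B_d <> 0 by the PBH
   test for (A, B_d). Since w_a B_d c is the value at t of the nonzero
   polynomial with coefficient row w_a B_d, any natural number t that is not
   a root of the product of these polynomials works. *)

Section Sparsity.
Context {F : pzRingType} {n : nat}.

Lemma nnz_col (b : 'cV[F]_n) : nnz b = #|[set i | b i 0 != 0]|.
Proof.
rewrite /nnz (_ : [set _ | _] = [set (i, 0) | i in [set i | b i 0 != 0]]).
  by rewrite card_imset // => i j [].
apply/setP => -[i j]; rewrite !inE /=; apply/idP/imsetP.
  by rewrite (ord1 j) => bi0; exists i; rewrite ?inE.
by case=> i'; rewrite inE => bi0 [-> ->].
Qed.

Lemma nnz_diag_mx (d : 'rV[F]_n) : nnz (diag_mx d) = #|[set i | d 0 i != 0]|.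
Proof.
rewrite /nnz (_ : [set _ | _] = [set (i, i) | i in [set i | d 0 i != 0]]).
  by rewrite card_imset // => i j [].
apply/setP => -[i j]; rewrite !inE mxE /=; apply/idP/imsetP.
  case: (eqVneq i j) => [<-|]; last by rewrite mulr0n eqxx.
  by rewrite mulr1n => di0; exists i; rewrite ?inE.
by case=> i'; rewrite inE => di0 [-> ->]; rewrite eqxx mulr1n.
Qed.

Lemma nnz_diag_mx_tr (b : 'cV[F]_n) : nnz (diag_mx b^T) = nnz b.
Proof.
by rewrite nnz_diag_mx nnz_col; apply: eq_card => i; rewrite !inE mxE.
Qed.

Lemma nnz_diag_mx_mul (d : 'rV[F]_n) (c : 'cV[F]_n) :
  (nnz (diag_mx d *m c) <= nnz (diag_mx d))%N.
Proof.
rewrite nnz_col nnz_diag_mx; apply/subset_leq_card/subsetP => i.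
by rewrite !inE mul_diag_mx mxE; apply: contraNneq => ->; rewrite mul0r.
Qed.

Lemma diag_mx_tr_mul1 (b : 'cV[F]_n) : diag_mx b^T *m const_mx 1 = b.
Proof. by apply/matrixP => i j; rewrite mul_diag_mx !mxE mulr1 (ord1 j). Qed.

End Sparsity.

Lemma map_mxXn {aR rR : pzRingType} (f : {rmorphism aR -> rR}) {n}
    (A : 'M[aR]_n) i :
  map_mx f (A ^+ i) = map_mx f A ^+ i.
Proof.
elim: i => [|i IHi]; first by rewrite !expr0 map_mx1.
by rewrite !exprS -!mulmxE map_mxM IHi.
Qed.

Lemma map_mxrow {aR rR : pzRingType} (f : aR -> rR) {q} {q_ : 'I_q -> nat} {m}
    (B_ : forall j, 'M[aR]_(m, q_ j)) :
  map_mx f (\mxrow_j B_ j) = \mxrow_j map_mx f (B_ j).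
Proof. by apply/matrixP => i j; rewrite !mxE. Qed.

Lemma eigenvectorX {F : pzRingType} {n} {A : 'M[F]_n} {v : 'rV_n} {a} i :
  v *m A = a *: v -> v *m A ^+ i = a ^+ i *: v.
Proof.
move=> vA; elim: i => [|i IHi]; first by rewrite !expr0 mulmx1 scale1r.
by rewrite exprSr -mulmxE mulmxA IHi -scalemxAl vA scalerA -exprSr.
Qed.

Section Controllability.
Variables (F : fieldType) (n m : nat) (A : 'M[F]_n) (B : 'M[F]_(n, m)).

Lemma mulmx_ctrb_mx p (X : 'M_(p, n)) :
  X *m ctrb_mx A B = \mxrow_i (X *m A ^+ i *m B).
Proof. by rewrite /ctrb_mx mul_mxrow; apply: eq_mxrow => i; rewrite mulmxA. Qed.

Lemma mulmx_ctrb_mx_eq0 p (X : 'M_(p, n)) :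
  X *m ctrb_mx A B = 0 <-> forall i : 'I_n, X *m A ^+ i *m B = 0.
Proof.
rewrite mulmx_ctrb_mx -(mxrow0 (q_ := fun=> m)).
by split => [/eq_mxrowP | /eq_mxrowP].
Qed.

Lemma controllableP :
  reflect (forall w : 'rV_n, (forall i : 'I_n, w *m A ^+ i *m B = 0) -> w = 0)
          (controllable A B).
Proof.
apply: (iffP idP) => [cAB w /mulmx_ctrb_mx_eq0 /eqP | w0].
  by rewrite mulmx_free_eq0 // => /eqP.
rewrite /controllable -/(row_free _) -kermx_eq0; apply/rowV0Pn.
by case=> w /sub_kermxP /mulmx_ctrb_mx_eq0 /w0 ->; rewrite eqxx.
Qed.

End Controllability.

Lemma controllable_mulmxr {F : fieldType} {n m p} (A : 'M[F]_n) (B : 'M_(n, m))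
    (C : 'M_(m, p)) :
  controllable A (B *m C) -> controllable A B.
Proof.
move=> /controllableP cABC; apply/controllableP => w wB0.
by apply: cABC => i; rewrite mulmxA wB0 mul0mx.
Qed.

Lemma controllable_map {aF rF : fieldType} (f : {rmorphism aF -> rF}) {n m}
    (A : 'M[aF]_n) (B : 'M_(n, m)) :
  controllable (map_mx f A) (map_mx f B) = controllable A B.
Proof.
rewrite /controllable -(mxrank_map f) /ctrb_mx; congr (\rank _ == n); symmetry.
by rewrite map_mxrow; apply: eq_mxrow => i; rewrite map_mxM map_mxXn.
Qed.

Lemma exp_mx_lincomb_powers {F : fieldType} {n} (A : 'M[F]_n.+1) i :
  exists c : 'I_n.+1 -> F, A ^+ i = \sum_j c j *: A ^+ j.
Proof.
set r := 'X^i %% char_poly A.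
have size_r : (size r <= n.+1)%N.
  by rewrite -ltnS -(size_char_poly A) ltn_modp -size_poly_eq0 size_char_poly.
have -> : A ^+ i = horner_mx A r.
  transitivity (horner_mx A 'X^i); first by rewrite rmorphXn /= horner_mx_X.
  rewrite {1}(divp_eq 'X^i (char_poly A)) rmorphD rmorphM /=.
  by rewrite Cayley_Hamilton mulr0 add0r.
have -> : r = \poly_(j < n.+1) r`_j.
  apply/polyP => j; rewrite coef_poly; case: ltnP => // /(leq_trans size_r).
  by move/(nth_default 0).
exists (fun j => r`_j); rewrite poly_def rmorph_sum; apply: eq_bigr => j _.
rewrite -mul_polyC rmorphM /= horner_mx_C rmorphXn /= horner_mx_X.
by rewrite -mulmxE mul_scalar_mx.
Qed.

Lemma mulmx_ctrb_mx_eq0_exp {F : fieldType} {n m p} (A : 'M[F]_n)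
    (B : 'M_(n, m)) (X : 'M_(p, n)) :
  X *m ctrb_mx A B = 0 -> forall i, X *m A ^+ i *m B = 0.
Proof.
case: n A B X => [|n] A B X; first by move=> _ i; rewrite [X]thinmx0 !mul0mx.
move=> /mulmx_ctrb_mx_eq0 XAB0 i; have [c ->] := exp_mx_lincomb_powers A i.
rewrite mulmx_sumr mulmx_suml big1 // => j _.
by rewrite -scalemxAr -scalemxAl XAB0 scaler0.
Qed.

Lemma stablemx_kermx_ctrb {F : fieldType} {n m} (A : 'M[F]_n) (B : 'M_(n, m)) :
  stablemx (kermx (ctrb_mx A B)) A.
Proof.
have /mulmx_ctrb_mx_eq0_exp WAB0 := mulmx_ker (ctrb_mx A B).
apply/sub_kermxP/mulmx_ctrb_mx_eq0 => i.
by rewrite -(mulmxA _ A) mulmxE -exprS -mulmxE WAB0.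
Qed.

Lemma stablemx_eigenvector {F : closedFieldType} {m n} {W : 'M[F]_(m, n)}
    {A : 'M_n} :
  stablemx W A -> W != 0 ->
  exists a (w : 'rV_n), [/\ w != 0, (w <= W)%MS & w *m A = a *: w].
Proof.
move=> sWA W_neq0; set V := row_base W.
have sVA : stablemx V A by rewrite stablemx_row_base.
have [a] : exists a, root (char_poly (conjmx V A)) a.
  by apply/closed_rootP; rewrite size_char_poly eqSS mxrank_eq0.
rewrite -eigenvalue_root_char => /eigenvalueP[v vA v_neq0].
have : (v <= eigenspace (conjmx V A) a)%MS by apply/eigenspaceP.
rewrite sub_eigenspace_conjmx ?row_base_free // => /eigenspaceP vVA.
exists a, (v *m V); split => //; first by rewrite mulmx_free_eq0 ?row_base_free.
by rewrite -(eq_row_base W) submxMl.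
Qed.

Lemma controllable_PBH {F : closedFieldType} {n m} (A : 'M[F]_n)
    (B : 'M_(n, m)) :
  controllable A B <->
  (forall a (w : 'rV_n), w *m A = a *: w -> w *m B = 0 -> w = 0).
Proof.
split=> [/controllableP cAB a w wA wB0 | PBH].
  by apply: cAB => i; rewrite (eigenvectorX i wA) -scalemxAl wB0 scaler0.
apply: contraT => ncAB.
have ker_neq0 : kermx (ctrb_mx A B) != 0 by rewrite kermx_eq0.
have [a [w [w_neq0 /sub_kermxP wAB0 wA]]] :=
  stablemx_eigenvector (stablemx_kermx_ctrb A B) ker_neq0.
have := mulmx_ctrb_mx_eq0_exp _ _ _ wAB0 0.
by rewrite expr0 mulmx1 => /(PBH a w wA) w0; rewrite w0 eqxx in w_neq0.
Qed.

Lemma char_poly_split {F : closedFieldType} {n} (A : 'M[F]_n) :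
  exists rs : seq F, char_poly A = \prod_(z <- rs) ('X - z%:P).
Proof.
have [rs charA] := closed_field_poly_normal (char_poly A); exists rs.
by rewrite charA (monicP (char_poly_monic A)) scale1r.
Qed.

Lemma rank_eigenspace_le1 {F : closedFieldType} {n} {A : 'M[F]_n} :
  (forall z, mup z (char_poly A) <= 1)%N ->
  forall z, (\rank (eigenspace A z) <= 1)%N.
Proof.
(* The n distinct eigenvalues have nonzero eigenspaces in direct sum. *)
move=> mup_le1 z; have [rs charA] := char_poly_split A.
have eigA a : eigenvalue A a = (a \in rs).
  by rewrite eigenvalue_root_char charA root_prod_XsubC.
have [z_rs | ] := boolP (z \in rs); last first.
  by rewrite -eigA negbK => /eqP ->; rewrite mxrank0.
have size_rs : size rs = n.
  by apply: succn_inj; rewrite -(size_char_poly A) charA size_prod_XsubC.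
have uniq_rs : uniq rs.
  apply: count_mem_uniq => x; have := mup_le1 x; rewrite charA mu_prod_XsubC.
  have [x_rs | /count_memPn -> //] := boolP (x \in rs).
  have : (0 < count_mem x rs)%N by rewrite -has_count has_pred1.
  by case: (count_mem x rs) => [|[|]].
pose E (i : 'I_(size rs)) := eigenspace A rs`_i.
have E_ge1 i : (1 <= \rank (E i) ?= iff (1 == \rank (E i)))%N.
  apply/leqif_eq; rewrite lt0n mxrank_eq0.
  by have := mem_nth 0 (ltn_ord i); rewrite -eigA.
have sum_rank_le : (\sum_i \rank (E i) <= size rs)%N.
  have : mxdirect (\sum_i E i).
    apply: mxdirect_sum_eigenspace => i j _ _ /eqP.
    by rewrite nth_uniq // => /eqP /val_inj.
  rewrite mxdirectE /= => /eqP <-.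
  by apply: leq_trans (rank_leq_col _) _; rewrite size_rs.
have /leqif_sum := fun i (_ : true) => E_ge1 i.
rewrite sum1_card card_ord => -[sum_rank_ge /esym].
rewrite eqn_leq sum_rank_ge sum_rank_le => /forall_inP.
have z_idx : (index z rs < size rs)%N by rewrite index_mem.
move=> /(_ (Ordinal z_idx) isT).
by rewrite /E /= nth_index // => /eqP <-.
Qed.

Definition pow_col {F : pzRingType} m (x : F) : 'cV[F]_m := \col_(j < m) x ^+ j.

Lemma map_pow_col {aR rR : pzRingType} (f : {rmorphism aR -> rR}) m x :
  map_mx f (pow_col m x) = pow_col m (f x).
Proof. by apply/matrixP => i j; rewrite !mxE rmorphXn. Qed.

Lemma horner_rVpoly {F : comNzRingType} {m} (v : 'rV[F]_m) x :
  (rVpoly v).[x] = (v *m pow_col m x) 0 0.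
Proof.
rewrite (horner_coef_wide _ (size_poly _ _)) mxE.
by apply: eq_bigr => j _; rewrite coef_rVpoly_ord mxE.
Qed.

Lemma exists_nat_nonroot {F : numDomainType} (p : {poly F}) :
  p != 0 -> exists t : nat, ~~ root p t%:R.
Proof.
move=> p_neq0; set ts := iota 0 (size p).
have [/hasP[t _ pt] | /hasPn all_root] :=
  boolP (has (fun t : nat => ~~ root p t%:R) ts); first by exists t.
suff : (size [seq (t%:R : F) | t <- ts] < size p)%N.
  by rewrite size_map size_iota ltnn.
apply: max_poly_roots p_neq0 _ _.
  by rewrite all_map; apply/allP => t /all_root /negPn.
by rewrite map_inj_uniq ?iota_uniq // => s t /eqP; rewrite eqr_nat => /eqP.
Qed.

Section DistinctEigenvalues.
Variables (F : numClosedFieldType) (n : nat) (A : 'M[F]_n).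
Hypothesis rank_eigenspace_le1 : forall a, (\rank (eigenspace A a) <= 1)%N.

Lemma eigenspace_sub_eigenvector {a} {w : 'rV_n} :
  w *m A = a *: w -> w != 0 -> (eigenspace A a <= w)%MS.
Proof.
move=> /eigenspaceP wE w_neq0.
rewrite -(mxrank_leqif_sup wE).2 eqn_leq mxrankS //=.
by rewrite rank_rV w_neq0 rank_eigenspace_le1.
Qed.

Lemma controllable_mul_pow_col m (B : 'M_(n, m)) :
  controllable A B -> exists t : nat, controllable A (B *m pow_col m t%:R).
Proof.
move=> /controllable_PBH cAB; have [rs charA] := char_poly_split A.
have eigA a : eigenvalue A a = (a \in rs).
  by rewrite eigenvalue_root_char charA root_prod_XsubC.
pose v a := nz_row (eigenspace A a).
have vA a : v a *m A = a *: v a by apply/eigenspaceP/nz_row_sub.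
pose p a := rVpoly (v a *m B).
have p_neq0 a : a \in rs -> p a != 0.
  rewrite -eigA /p => eig_a.
  apply: contraNneq eig_a => /(congr1 (@poly_rV _ m)).
  rewrite rVpolyK linear0 => /(cAB a _ (vA a)) /eqP.
  by rewrite nz_row_eq0 => /eqP ->.
have [t Qt] : exists t : nat, ~~ root (\prod_(a <- rs) p a) t%:R.
  by apply: exists_nat_nonroot; rewrite prodf_seq_neq0; apply/allP.
exists t; apply/controllable_PBH => a w wA wBc0.
apply: contraNeq Qt => w_neq0.
have a_rs : a \in rs by rewrite -eigA; apply/eigenvalueP; exists w.
have /submxP[X vX] : (v a <= w)%MS.
  exact: submx_trans (nz_row_sub _) (eigenspace_sub_eigenvector wA w_neq0).
rewrite /root horner_prod prodf_seq_eq0; apply/hasP; exists a => //=.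
by rewrite /p horner_rVpoly vX -!mulmxA wBc0 !mulmx0 mxE.
Qed.

End DistinctEigenvalues.

Theorem theorem2 (R : realType) (n k : nat) (A : 'M[R]_n) :
  distinct_eigenvalues A ->
  ((exists Bv : 'cV[R]_n, sparse k Bv /\ controllable A Bv) <->
   (exists d : 'rV[R]_n, sparse k (diag_mx d) /\ controllable A (diag_mx d))).
Proof.
move=> distinctA; split=> [[b [sb cb]] | [d [sd cd]]].
  exists b^T; split; first by rewrite /sparse nnz_diag_mx_tr.
  apply: (controllable_mulmxr _ _ (const_mx 1 : 'cV_n)).
  by rewrite diag_mx_tr_mul1.
pose f := real_complex R.
have [t ct] : exists t : nat,
    controllable (map_mx f A) (map_mx f (diag_mx d) *m pow_col n t%:R).
  apply: controllable_mul_pow_col; first exact: rank_eigenspace_le1.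
  by rewrite controllable_map.
exists (diag_mx d *m pow_col n t%:R); split.
  exact: leq_trans (nnz_diag_mx_mul _ _) sd.
by rewrite -(controllable_map f) map_mxM map_pow_col rmorph_nat.
Qed.
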